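(* Let $n\ge 1$, let $\omega\in(\mathbb{Z}/n\mathbb{Z})^\times$ (represented by an integer), let $r\in\mathbb{Z}/n\mathbb{Z}$, and let $X=\langle\omega\rangle r$. Put $k=\gcd\left(\omega-1,\frac{n}{\gcd(r,n)}\right)$. Then $\sigma_X$ has $k$-fold dihedral symmetry: its image $\{\sigma_X(y):y\in\mathbb{Z}/n\mathbb{Z}\}$ is invariant under complex conjugation and under rotation by $2\pi/k$ about the origin.
   Context: Write $e(\theta)=\exp(2\pi i\theta)$. For a subgroup $A$ of $(\mathbb{Z}/n\mathbb{Z})^\times$ and $r\in\mathbb{Z}/n\mathbb{Z}$, let $X=Ar=\{ar:a\in A\}$ and $\sigma_X(y)=\sum_{x\in X}e\left(\frac{xy}{n}\right)$ for $y\in\mathbb{Z}/n\mathbb{Z}$. $\langle\omega\rangle$ is the cyclic subgroup generated by $\omega$. A function is said to have $k$-fold dihedral symmetry if its image is invariant under the natural action of the dihedral group of order $2k$, i.e. under complex conjugation and rotation by $2\pi/k$ about $0$. *)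

From HB Require Import structures.
From mathcomp Require Import all_boot all_order all_algebra all_field.
Unset Printing Implicit Defensive.
Import Order.TTheory GRing.Theory Num.Theory.
Local Open Scope ring_scope.

(* zeta n = exp(2 pi i / n).  n.-root (-1) is the n-th root of -1 with minimal
   non-negative argument, i.e. exp(i pi / n) for n > 1 (and -1 for n = 1);
   its square is exp(2 pi i / n) (and 1 for n = 1). *)
Definition zeta (n : nat) : algC := (n.-root (-1)) ^+ 2.

(* e(m / n) for m a natural number *)
Definition en (n m : nat) : algC := zeta n ^+ m.

(* X = <omega> r as a subset of Z/nZ (residues represented by 'I_n).
   The subgroup <omega> of (Z/nZ)^x is {omega^j mod n : j in N}; since the
   multiplicative order of omega mod n is at most totient n <= n, exponents
   j < n already give every element. *)
Definition orbitX (n omega r : nat) : {set 'I_n} :=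
  [set x : 'I_n | [exists j : 'I_n, nat_of_ord x == (omega ^ j * r) %% n]%N].

Definition sigmaX (n omega r : nat) (y : 'I_n) : algC :=
  \sum_(x in orbitX n omega r) en n (x * y)%N.

Definition in_image_sigmaX (n omega r : nat) (z : algC) : Prop :=
  exists y : 'I_n, sigmaX n omega r y = z.

Definition dihedral_symmetric (S : algC -> Prop) (k : nat) : Prop :=
  (forall z, S (z^*) <-> S z) /\
  (forall z, S (zeta k * z) <-> S z).

(* Conjugation: sigma_X(y)^* = sigma_X(-y), because e(m/n)^* = e(-m/n).
   Rotation: writing r = r' g with g = gcd(r, n) and n = n' g, the shift
   t = i s (n'/k), with s an inverse of r' modulo n', satisfies
   x t = (n/k) i (mod n) for every x in X, as omega = 1 (mod k).  Hence
   sigma_X(y + t) = e(i/k) sigma_X(y) for every i, and e(1/k) is such a power.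

   Everything rests on the fact that zeta n = (n.-root (-1))^2 really is
   e(1/n), i.e. a primitive n-th root of unity.  algC characterises
   n.-root (-1) only as the n-th root of -1 of maximal real part (with
   nonnegative imaginary part); if its order were a proper divisor of 2n, a
   Parseval argument on the e-th roots of y = n.-root (-1) would produce a
   root of -1 with larger real part. *)
Set Warnings "-notation-overridden,-ambiguous-paths,-notation-incompatible-prefix".
From HB Require Import structures.
From mathcomp Require Import all_boot all_order all_algebra all_field.
From mathcomp Require Import ring zify.
Import Order.TTheory GRing.Theory Num.Theory.
Local Open Scope ring_scope.

Lemma geometric_sum_unity (R : idomainType) (u : R) e :
  u ^+ e = 1 -> u != 1 -> \sum_(i < e) u ^+ i = 0.
Proof.
move=> ue u_neq1; have := subrX1 u e; rewrite ue subrr => /esym/eqP.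
by rewrite mulf_eq0 subr_eq0 (negbTE u_neq1) => /eqP.
Qed.

Lemma oppr1_neq1 (R : numDomainType) : (-1 : R) == 1 = false.
Proof. exact: lt_eqF (lt_trans (ltrN10 R) ltr01). Qed.

Lemma norm_eq1_of_expr {R : numDomainType} {u : R} {e : nat} :
  (0 < e)%N -> `|u ^+ e| = 1 -> `|u| = 1.
Proof.
by move=> e_gt0 ue; apply/eqP; rewrite -(pexpr_eq1 e_gt0) ?normr_ge0 -?normrX ?ue.
Qed.

Lemma mul_conjC_norm1 {u : algC} : `|u| = 1 -> u * u^* = 1.
Proof. by move=> nu; rewrite -normCK nu expr1n. Qed.

Lemma conjC_unity {u : algC} {e : nat} : (0 < e)%N -> u ^+ e = 1 -> u^* = u ^+ e.-1.
Proof.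
move=> e_gt0 ue; have nu : `|u| = 1 by apply: (norm_eq1_of_expr e_gt0); rewrite ue normr1.
have u_neq0 : u != 0 by rewrite -normr_eq0 nu oner_neq0.
by apply: (mulfI u_neq0); rewrite mul_conjC_norm1 // -exprS prednK.
Qed.

Lemma normCB1 (w : algC) : `|w| = 1 -> `|w - 1| ^+ 2 = 2 - 2 * 'Re w.
Proof.
move=> nw; rewrite normCK rmorphB rmorph1 ReE.
have -> : (w - 1) * (w^* - 1) = w * w^* - w - w^* + 1 by ring.
by rewrite mul_conjC_norm1 //; field.
Qed.

(* The e-th roots z0 om^i (om a primitive e-th root, |z0| = 1) of a point of
   the unit circle; the vectors (z_i^j)_i for j < e are orthogonal, which
   gives a Parseval identity for the geometric sums sum_j z_i^j. *)
Section RootsOfAPointOnTheCircle.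
Variables (e : nat) (om z0 : algC).
Hypothesis om_prim : e.-primitive_root om.
Hypothesis z0_norm : `|z0| = 1.
Local Notation z i := (z0 * om ^+ i).

Lemma roots_orthogonal (j l : 'I_e) :
  \sum_(i < e) z i ^+ j * (z i ^+ l)^* = if j == l then e%:R else 0.
Proof.
have om_norm : `|om| = 1.
  by apply: (norm_eq1_of_expr (prim_order_gt0 om_prim)); rewrite prim_expr_order ?normr1.
have omc := mul_conjC_norm1 om_norm; have z0c := mul_conjC_norm1 z0_norm.
have split_term (i : nat) : z i ^+ j * (z i ^+ l)^* =
    (z0 ^+ j * z0^* ^+ l) * (om ^+ j * om^* ^+ l) ^+ i.
  rewrite !rmorphXn rmorphM rmorphXn !exprMn.
  by rewrite [(om ^+ i) ^+ j]exprAC [(om^* ^+ i) ^+ l]exprAC mulrACA.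
under eq_bigr => i _ do rewrite split_term.
case: eqP => [->|/eqP j_neq_l].
  rewrite -!exprMn z0c omc !expr1n.
  by under eq_bigr do rewrite expr1n mul1r; rewrite sumr_const card_ord.
rewrite -mulr_sumr geometric_sum_unity ?mulr0 //.
  have om_e := prim_expr_order om_prim.
  rewrite exprMn -!exprM mulnC exprM om_e expr1n mul1r.
  by rewrite mulnC exprM -rmorphXn om_e rmorph1 expr1n.
apply: contra j_neq_l => /eqP unit_ratio.
have : om ^+ j = om ^+ l.
  rewrite -[om ^+ j]mulr1 -(expr1n _ l) -omc exprMn [om ^+ l * _]mulrC.
  by rewrite mulrA unit_ratio mul1r.
by move/eqP; rewrite (eq_prim_root_expr om_prim) !modn_small.
Qed.

Lemma roots_parseval :
  \sum_(i < e) `|\sum_(j < e) z i ^+ j| ^+ 2 = (e * e)%:R.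
Proof.
under eq_bigr => i _ do rewrite normCK rmorph_sum mulr_suml.
under eq_bigr => i _ do under eq_bigr => j _ do rewrite mulr_sumr.
rewrite exchange_big /=; under eq_bigr => j _ do rewrite exchange_big /=.
under eq_bigr => j _ do under eq_bigr => l _ do rewrite roots_orthogonal.
have diag (j : 'I_e) : \sum_(l < e) (if j == l then e%:R else 0 : algC) = e%:R.
  rewrite (bigD1 j) //= eqxx big1 ?addr0 // => l /negbTE.
  by rewrite eq_sym => ->.
under eq_bigr => j _ do rewrite diag.
by rewrite sumr_const card_ord natrM mulr_natl.
Qed.

(* Since the e squares average to e > 1, one of them exceeds 1. *)
Lemma exists_large_geometric_sum :
  (1 < e)%N -> exists i : 'I_e, 1 < `|\sum_(j < e) z i ^+ j| ^+ 2.
Proof.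
move=> e_gt1; apply/existsP; apply: contraT => /existsPn all_small.
have : \sum_(i < e) `|\sum_(j < e) z i ^+ j| ^+ 2 <= \sum_(i < e) (1 : algC).
  apply: ler_sum => i _; have := all_small i.
  by rewrite real_leNgt ?rpred1 ?rpredX ?normr_real.
rewrite roots_parseval sumr_const card_ord -mulr_natl mulr1 ler_nat.
have : (e * 2 <= e * e)%N by rewrite leq_mul2l e_gt1 orbT.
lia.
Qed.

End RootsOfAPointOnTheCircle.

(* Every point y != 1 of the unit circle has, for each e > 1, an e-th root
   strictly closer to 1: if z^e = y then |y - 1| = |z - 1| |sum_j z^j|, and
   some e-th root has a geometric sum of norm > 1. *)
Lemma closer_root {y : algC} {e : nat} :
  (1 < e)%N -> `|y| = 1 -> y != 1 -> exists2 z, z ^+ e = y & 'Re y < 'Re z.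
Proof.
move=> e_gt1 ny y_neq1; have e_gt0 := ltnW e_gt1.
have [om om_prim] := C_prim_root_exists e_gt0.
set z0 := e.-root y; have z0e : z0 ^+ e = y by rewrite rootCK.
have nz0 : `|z0| = 1 by apply: (norm_eq1_of_expr e_gt0); rewrite z0e.
have [i large] := exists_large_geometric_sum _ _ _ om_prim nz0 e_gt1.
set z := z0 * om ^+ i.
have ze : z ^+ e = y by rewrite exprMn exprAC (prim_expr_order om_prim) expr1n mulr1.
have nz : `|z| = 1 by apply: (norm_eq1_of_expr e_gt0); rewrite ze.
have factor : y - 1 = (z - 1) * \sum_(j < e) z ^+ j by rewrite -ze subrX1.
have z_neq1 : z - 1 != 0.
  by apply: contraNneq y_neq1 => /eqP; rewrite subr_eq0 -ze => /eqP ->; rewrite expr1n.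
have closer : `|z - 1| ^+ 2 < `|y - 1| ^+ 2.
  by rewrite factor normrM exprMn ltr_pMr // exprn_gt0 // normr_gt0.
exists z => //; move: closer; rewrite !normCB1 //.
by rewrite ltrD2l ltrN2 ltr_pM2l ?ltr0n.
Qed.

(* n.-root (-1) has the largest real part among all n-th roots of -1
   (algC only guarantees it among those in the upper half plane). *)
Lemma rootN1_Re_max {n : nat} {z : algC} :
  (0 < n)%N -> z ^+ n = -1 -> 'Re z <= 'Re (n.-root (-1)).
Proof.
move=> n_gt0 zn; have [Im_ge0|Im_lt0] := boolP (0 <= 'Im z).
  exact: rootC_Re_max.
rewrite -Re_conj; apply: rootC_Re_max => //.
  by rewrite -rmorphXn zn rmorphN1.
rewrite Im_conj oppr_ge0; move: Im_lt0.
by rewrite -real_ltNge ?Creal_Im ?rpred0 // => /ltW.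
Qed.

(* If y^n = -1 and the order m of y is a proper divisor of 2n, then
   2n = e m with e odd (as m does not divide n), so m = 2h, n = e h with
   e > 1, and y^h = -1 (a square root of 1 other than 1). *)
Lemma rootN1_small_order {y : algC} {n m : nat} :
  m.-primitive_root y -> (m %| 2 * n)%N -> m != (2 * n)%N -> y ^+ n = -1 ->
  exists e h, [/\ (1 < e)%N, n = (e * h)%N & y ^+ h = -1].
Proof.
move=> y_prim m_dvd m_neq yn; have m_gt0 := prim_order_gt0 y_prim.
have m_ndvd_n : ~~ (m %| n)%N.
  by rewrite (prim_order_dvd y_prim) yn oppr1_neq1.
set e := (2 * n %/ m)%N; have two_n : (2 * n = e * m)%N by rewrite divnK.
have e_odd : odd e.
  apply: contraR m_ndvd_n; rewrite -dvdn2 => /dvdnP [f ef].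
  by apply/dvdnP; exists f; move: two_n; rewrite ef; lia.
have [h m2h] : exists h, m = (h * 2)%N.
  exists (m %/ 2)%N; rewrite divnK // dvdn2.
  apply: contraL e_odd => m_odd; move: (congr1 odd two_n).
  by rewrite !oddM m_odd andbT => <-.
have e_gt1 : (1 < e)%N.
  have e_neq0 : e != 0%N by apply: contraTneq e_odd => ->.
  have e_neq1 : e != 1%N by apply: contraNneq m_neq => e1; rewrite two_n e1 mul1n.
  lia.
exists e, h; split => //; first by lia.
have : (y ^+ h) ^+ 2 == 1 by rewrite -exprM -m2h prim_expr_order.
rewrite sqrf_eq1 => /orP [|/eqP //].
by rewrite -(prim_order_dvd y_prim) gtnNdvd //; lia.
Qed.

Lemma rootN1_prim {n : nat} :
  (0 < n)%N -> (2 * n).-primitive_root (n.-root (-1) : algC).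
Proof.
move=> n_gt0; set y := n.-root (-1 : algC); have yn : y ^+ n = -1 by rewrite rootCK.
have ny : `|y| = 1 by apply: (norm_eq1_of_expr n_gt0); rewrite yn normrN1.
have y2n : y ^+ (2 * n) = 1 by rewrite mulnC exprM yn sqrrN expr1n.
have [m y_prim m_dvd] := prim_order_exists (ltac:(lia) : (0 < 2 * n)%N) y2n.
have [<-|m_neq] := eqVneq m (2 * n)%N; first by [].
have [e [h [e_gt1 neh yh]]] := rootN1_small_order y_prim m_dvd m_neq yn.
have y_neq1 : y != 1.
  by apply: contraPneq yh => ->; rewrite expr1n => /eqP; rewrite eq_sym oppr1_neq1.
have [z ze closer] := closer_root e_gt1 ny y_neq1.
have zn : z ^+ n = -1 by rewrite neh exprM ze yh.
by have := rootN1_Re_max n_gt0 zn; rewrite real_leNgt ?Creal_Re // closer.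
Qed.

Lemma zeta_prim {n : nat} : (0 < n)%N -> n.-primitive_root (zeta n).
Proof.
by move=> n_gt0; have := exp_prim_root (rootN1_prim n_gt0) 2; rewrite gcdnMr mulKn.
Qed.

Lemma en_congr {n : nat} (a b : nat) : (0 < n)%N -> (a = b %[mod n])%N -> en n a = en n b.
Proof.
move=> n_gt0 ab; have zn := prim_expr_order (zeta_prim n_gt0).
by rewrite /en -(expr_mod a zn) ab expr_mod.
Qed.

(* Multiplication by e(1/k) maps the image onto itself as soon as it maps it
   into itself, since e(1/k) has finite order; conjugation is an involution. *)
Lemma dihedral_symmetricP (S : algC -> Prop) k : (0 < k)%N ->
  (forall z, S z -> S z^*) -> (forall z, S z -> S (zeta k * z)) ->
  dihedral_symmetric S k.
Proof.
move=> k_gt0 conjS rotS; have zk := prim_expr_order (zeta_prim k_gt0).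
have rotXS m z : S z -> S (zeta k ^+ m * z).
  by elim: m z => [|m IH] z Sz; rewrite ?expr0 ?mul1r // exprS -mulrA; apply/rotS/IH.
split=> z; split; [by move/conjS; rewrite conjCK | exact: conjS | | exact: rotS].
by move/(rotXS k.-1); rewrite mulrA -exprSr prednK // zk mul1r.
Qed.

(* With r = r' g and n = n' g
   (g = gcd(r, n)), take t = i s (n'/k) where s inverts r' modulo n'. *)
Lemma orbit_shift n omega r k i :
  (0 < n)%N -> coprime omega n -> (k %| omega - 1)%N -> (k %| n %/ gcdn r n)%N ->
  exists t, forall j, (omega ^ j * r * t = n %/ k * i %[mod n])%N.
Proof.
move=> n_gt0 omega_coprime k_dvd_omega1 k_dvd.
set g := gcdn r n in k_dvd *; have g_gt0 : (0 < g)%N by rewrite gcdn_gt0 n_gt0 orbT.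
set n' := (n %/ g)%N in k_dvd *; set r' := (r %/ g)%N.
have n_eq : n = (n' * g)%N by rewrite divnK ?dvdn_gcdr.
have r_eq : r = (r' * g)%N by rewrite divnK ?dvdn_gcdl.
have n'_gt0 : (0 < n')%N by move: n_gt0; rewrite n_eq muln_gt0 => /andP[].
have k_gt0 : (0 < k)%N by apply: dvdn_gt0 k_dvd.
set a := (n' %/ k)%N; have n'_eq : n' = (a * k)%N by rewrite divnK.
have r'_coprime : coprime r' n'.
  rewrite /coprime -(eqn_pmul2r g_gt0) mul1n muln_gcdl -r_eq -n_eq.
  exact: eqxx.
set s := (r' ^ (totient n').-1)%N.
have r's_mod_k : (r' * s = 1 %[mod k])%N.
  rewrite -(modn_dvdm (r' * s) k_dvd) /s -expnS prednK ?totient_gt0 //.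
  by rewrite (cyclic.Euler_exp_totient r'_coprime) modn_dvdm.
have omega_mod_k : (omega = 1 %[mod k])%N.
  have [omega0|omega_gt0] := posnP omega; last first.
    by apply/eqP; rewrite eqn_mod_dvd.
  move: omega_coprime; rewrite omega0 /coprime gcd0n => /eqP n1.
  move: k_dvd; rewrite /n' /g n1 gcdn1 divn1 dvdn1 => /eqP ->.
  by rewrite !modn1.
have n_div_k : (n %/ k = a * g)%N by rewrite n_eq n'_eq mulnAC mulnK.
exists (i * s * a)%N => j.
have -> : (omega ^ j * r * (i * s * a) = (omega ^ j * (r' * s) * i) * (a * g))%N.
  by rewrite r_eq; ring.
have n_eq' : n = (k * (a * g))%N by rewrite n_eq n'_eq mulnAC mulnC.
rewrite n_div_k [in RHS]mulnC n_eq' -!muln_modl; congr (_ * _).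
have unit_mod : (omega ^ j * (r' * s) = 1 %[mod k])%N.
  by rewrite -modnMm -modnXm omega_mod_k r's_mod_k modnXm exp1n modnMm muln1.
by rewrite -modnMml unit_mod modnMml mul1n.
Qed.

Section Symmetries.
Variables n omega r : nat.
Hypothesis n_gt0 : (0 < n)%N.
Hypothesis omega_coprime : coprime omega n.
Local Notation k := (gcdn (omega - 1) (n %/ gcdn r n)).

(* sigma_X(y)^* = sigma_X(-y) = sigma_X((n-1) y). *)
Lemma sigmaX_conj (y : 'I_n) :
  exists y' : 'I_n, sigmaX n omega r y' = (sigmaX n omega r y)^*.
Proof.
exists (Ordinal (ltn_pmod (y * n.-1) n_gt0)); rewrite /sigmaX rmorph_sum.
apply: eq_bigr => x _; rewrite [RHS](conjC_unity n_gt0); last first.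
  by rewrite /en exprAC (prim_expr_order (zeta_prim n_gt0)) expr1n.
by rewrite /en -exprM -/(en _ _); apply: en_congr => //=; rewrite modnMmr mulnA.
Qed.

Lemma k_gt0 : (0 < k)%N.
Proof.
rewrite gcdn_gt0 divn_gt0 ?gcdn_gt0 ?n_gt0 ?orbT //.
by rewrite (dvdn_leq n_gt0 (dvdn_gcdr r n)) orbT.
Qed.

Lemma k_dvd_n : (k %| n)%N.
Proof. exact: dvdn_trans (dvdn_gcdr _ _) (dvdn_div (dvdn_gcdr r n)). Qed.

(* Shifting y by t rotates sigma_X(y) by e(i/k); e(1/k) is such a power. *)
Lemma sigmaX_rot (y : 'I_n) :
  exists y' : 'I_n, sigmaX n omega r y' = zeta k * sigmaX n omega r y.
Proof.
have W_prim := dvdn_prim_root (zeta_prim n_gt0) k_dvd_n.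
have [i zeta_k] := prim_rootP W_prim (prim_expr_order (zeta_prim k_gt0)).
have [t shift] :=
  orbit_shift n omega r k i n_gt0 omega_coprime (dvdn_gcdl _ _) (dvdn_gcdr _ _).
exists (Ordinal (ltn_pmod (y + t) n_gt0)); rewrite /sigmaX mulr_sumr.
apply: eq_bigr => x; rewrite inE => /existsP [j /eqP xE].
rewrite (en_congr _ (x * y + x * t) n_gt0) /=; last by rewrite modnMmr mulnDr.
rewrite /en exprD mulrC; congr (_ * _).
rewrite -/(en _ _) (en_congr _ (n %/ k * i) n_gt0); last by rewrite xE modnMml shift.
by rewrite /en exprM -zeta_k.
Qed.

End Symmetries.

Theorem proposition3p1 (n omega r : nat) :
  (1 <= n)%N -> coprime omega n ->
  dihedral_symmetric (in_image_sigmaX n omega r)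
    (gcdn (omega - 1) (n %/ gcdn r n)).
Proof.
move=> n_gt0 omega_coprime; apply: dihedral_symmetricP; first exact: k_gt0.
- by move=> _ [y <-]; have [y' y'E] := sigmaX_conj n omega r n_gt0 y; exists y'.
- move=> _ [y <-].
  by have [y' y'E] := sigmaX_rot n omega r n_gt0 omega_coprime y; exists y'.
Qed.
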